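(* Define $F:\mathbb{R}^2\to\mathbb{R}$ by $$F(x)=\begin{cases}\exp\!\left(\frac{1}{\|x\|_2^2-1}\right) & \|x\|_2<1\\ 0 & \|x\|_2=1\\ -\exp\!\left(\frac{-1}{\|x\|_2^2-1}\right)\left[\sin\!\left(\frac{1}{\|x\|_2-1}\right)\frac{x^{(1)}}{\|x\|_2}-\cos\!\left(\frac{1}{\|x\|_2-1}\right)\frac{x^{(2)}}{\|x\|_2}\right] & \|x\|_2>1,\end{cases}$$ where $x^{(1)},x^{(2)}$ are the components of $x$. Then $F$ is bounded from below, is differentiable at every point of $\mathbb{R}^2$, and its gradient is locally Lipschitz continuous on $\mathbb{R}^2$. *)

From Stdlib Require Import Reals.
From Coquelicot Require Import Coquelicot.
Open Scope R_scope.

Definition norm2 (x : R * R) : R := sqrt (fst x ^ 2 + snd x ^ 2).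

Definition dist2 (x y : R * R) : R := norm2 (fst x - fst y, snd x - snd y).

Definition F (x : R * R) : R :=
  let r := norm2 x in
  match Rlt_dec r 1 with
  | left _ => exp (1 / (r ^ 2 - 1))
  | right _ =>
      match Rlt_dec 1 r with
      | left _ =>
          - exp (-1 / (r ^ 2 - 1)) *
            (sin (1 / (r - 1)) * fst x / r - cos (1 / (r - 1)) * snd x / r)
      | right _ => 0
      end
  end.

Definition dotl (g : R * R) (h : R * R) : R := fst g * fst h + snd g * snd h.

Definition locally_lipschitz (g : R * R -> R * R) : Prop :=
  forall x : R * R, exists r : R, 0 < r /\ exists L : R,
    forall y z : R * R, dist2 y x < r -> dist2 z x < r ->
      dist2 (g y) (g z) <= L * dist2 y z.

From Stdlib Require Import Reals Lra Lia.
From Coquelicot Require Import Coquelicot.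
Open Scope R_scope.

(* Write s = |x|^2.  Then F x = B (2 - s) - P_0 s * x1 + P_(pi/2) s * x2, where B t =
   exp (-1 / (t - 1)) and P_c s = exp (-1 / (s - 1)) sin (1 / (sqrt s - 1) + c) / sqrt s
   for t, s > 1, and both vanish otherwise.  Since exp (-1/u) / u^n stays bounded as
   u -> 0+, these functions and their first two derivatives are O((s - 1)^2) at s = 1.
   Hence their extensions by zero are differentiable everywhere, with derivatives that
   are again differentiable with a continuous derivative, hence locally Lipschitz.  The
   gradient of F is built from them, x1 and x2 by sums and products, so it is locally
   Lipschitz as well.  Finally |P_c s * x_i| <= 1 since |x_i| <= sqrt s, so F >= -2. *)

(* [exp (/ u) = exp (/ (n * u)) ^ n >= (/ (n * u)) ^ n]. *)
Lemma exp_neg_inv_pow_le n u : (0 < n)%nat -> 0 < u -> exp (- / u) * (/ u) ^ n <= INR n ^ n.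
Proof.
  intros Hn Hu.
  assert (Hn' : 0 < INR n) by (apply lt_0_INR; exact Hn).
  assert (Hexp_pow : forall (m : nat) y, exp (INR m * y) = exp y ^ m).
  { induction m as [|m IH]; intros y; [simpl; rewrite Rmult_0_l; apply exp_0|].
    rewrite S_INR, Rmult_plus_distr_r, Rmult_1_l, exp_plus, IH; simpl; ring. }
  set (z := / u / INR n).
  assert (Hz : 0 <= z) by (unfold z; apply Rlt_le, Rdiv_lt_0_compat; [apply Rinv_0_lt_compat|]; lra).
  assert (Hu_z : / u = INR n * z) by (unfold z; field; lra).
  assert (Hz_exp : z ^ n <= exp (/ u)).
  { rewrite Hu_z, Hexp_pow. apply pow_incr. pose proof (exp_ineq1_le z). lra. }
  assert (Hinv : exp (- / u) * exp (/ u) = 1) by (rewrite <- exp_plus, Rplus_opp_l; apply exp_0).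
  rewrite Hu_z at 2. rewrite Rpow_mult_distr.
  pose proof (exp_pos (- / u)). pose proof (pow_le (INR n) n (Rlt_le _ _ Hn')).
  replace (INR n ^ n) with (INR n ^ n * (exp (- / u) * exp (/ u))) at 2 by (rewrite Hinv; ring).
  replace (exp (- / u) * (INR n ^ n * z ^ n)) with (INR n ^ n * (exp (- / u) * z ^ n)) by ring.
  apply Rmult_le_compat_l; [lra|]. apply Rmult_le_compat_l; lra.
Qed.

Definition flat_at_right (a : R) (f : R -> R) : Prop :=
  exists d K, 0 < d /\ forall s, a < s < a + d -> Rabs (f s) <= K * (s - a) ^ 2.

Lemma flat_at_right_of_exp_bound a f C :
  (forall s, a < s < a + 1 -> Rabs (f s) <= exp (- / (s - a)) * (C * (/ (s - a)) ^ 4)) ->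
  flat_at_right a f.
Proof.
  intros Hf. exists 1, (C * 6 ^ 6). split; [lra|]. intros s Hs.
  assert (Hu : 0 < s - a) by lra.
  pose proof (exp_neg_inv_pow_le 6 (s - a) ltac:(lia) Hu) as H6.
  replace (INR 6) with 6 in H6 by (simpl; ring).
  assert (Hsplit : exp (- / (s - a)) * (C * (/ (s - a)) ^ 4)
                   = C * (exp (- / (s - a)) * (/ (s - a)) ^ 6 * (s - a) ^ 2)) by (field; lra).
  assert (Hpos : 0 < exp (- / (s - a)) * (/ (s - a)) ^ 4)
    by (apply Rmult_lt_0_compat; [apply exp_pos|apply pow_lt, Rinv_0_lt_compat; lra]).
  specialize (Hf s Hs). pose proof (Rabs_pos (f s)).
  assert (HC : 0 <= C) by nra.
  apply Rle_trans with (C * (6 ^ 6 * (s - a) ^ 2)); [|right; ring].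
  eapply Rle_trans; [exact Hf|]. rewrite Hsplit.
  apply Rmult_le_compat_l; [exact HC|]. apply Rmult_le_compat_r; [nra|exact H6].
Qed.

Definition zero_ext (a : R) (f : R -> R) (s : R) : R := if Rlt_dec a s then f s else 0.

Lemma zero_ext_near_right a f s : a < s -> locally s (fun y => f y = zero_ext a f y).
Proof.
  intros Hs. apply (filter_imp (fun y => a < y)); [|exact (open_gt a s Hs)].
  intros y Hy. unfold zero_ext. destruct (Rlt_dec a y); [reflexivity|lra].
Qed.

Lemma zero_ext_near_left a f s : s < a -> locally s (fun y => 0 = zero_ext a f y).
Proof.
  intros Hs. apply (filter_imp (fun y => y < a)); [|exact (open_lt a s Hs)].
  intros y Hy. unfold zero_ext. destruct (Rlt_dec a y); [lra|reflexivity].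
Qed.

Lemma is_derive_of_sq_bound g a d K : 0 < d -> 0 <= K ->
  (forall s, Rabs (s - a) < d -> Rabs (g s) <= K * (s - a) ^ 2) -> is_derive g a 0.
Proof.
  intros Hd HK Hg.
  assert (Hga : g a = 0).
  { pose proof (Hg a ltac:(rewrite Rminus_diag, Rabs_R0; exact Hd)) as Ha.
    rewrite Rminus_diag in Ha. ring_simplify in Ha. apply Rabs_le_between in Ha. lra. }
  apply is_derive_Reals. intros eps Heps.
  assert (Hdelta : 0 < Rmin d (eps / (K + 1))).
  { apply Rmin_glb_lt; [exact Hd|]. apply Rdiv_lt_0_compat; lra. }
  exists (mkposreal _ Hdelta). intros h Hh0 Hh. simpl in Hh.
  pose proof (Rmin_l d (eps / (K + 1))). pose proof (Rmin_r d (eps / (K + 1))).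
  assert (Habs : 0 < Rabs h) by (apply Rabs_pos_lt; exact Hh0).
  assert (Hsmall : (K + 1) * Rabs h < eps).
  { assert (Hh' : Rabs h < eps / (K + 1)) by lra.
    apply (Rmult_lt_compat_l (K + 1)) in Hh'; [|lra].
    replace ((K + 1) * (eps / (K + 1))) with eps in Hh' by (field; lra). exact Hh'. }
  pose proof (Hg (a + h) ltac:(replace (a + h - a) with h by ring; lra)) as Hgh.
  replace (a + h - a) with h in Hgh by ring. rewrite <- (pow2_abs h) in Hgh.
  rewrite Hga, !Rminus_0_r. unfold Rdiv. rewrite Rabs_mult, Rabs_inv.
  apply (Rmult_lt_reg_r (Rabs h)); [exact Habs|].
  rewrite Rmult_assoc, Rinv_l, Rmult_1_r by lra.
  nra.
Qed.

Lemma is_derive_zero_ext_at a f : flat_at_right a f -> is_derive (zero_ext a f) a 0.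
Proof.
  intros [d [K [Hd Hf]]]. apply (is_derive_of_sq_bound _ a d (Rabs K) Hd (Rabs_pos K)).
  intros s Hs. unfold zero_ext. destruct (Rlt_dec a s) as [Has|Has].
  - eapply Rle_trans; [apply Hf; apply Rabs_lt_between' in Hs; lra|].
    apply Rmult_le_compat_r; [nra|apply Rle_abs].
  - rewrite Rabs_R0. apply Rmult_le_pos; [apply Rabs_pos|nra].
Qed.

Lemma is_derive_zero_ext a f f' :
  (forall s, a < s -> is_derive f s (f' s)) -> flat_at_right a f ->
  forall s, is_derive (zero_ext a f) s (zero_ext a f' s).
Proof.
  intros Hf Hflat s. unfold zero_ext at 2.
  destruct (Rlt_dec a s) as [Has|Has].
  - exact (is_derive_ext_loc _ _ _ _ (zero_ext_near_right a f s Has) (Hf s Has)).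
  - destruct (Rlt_dec s a) as [Hsa|Hsa].
    + exact (is_derive_ext_loc _ _ _ _ (zero_ext_near_left a f s Hsa) (is_derive_const 0 s)).
    + replace s with a by lra. exact (is_derive_zero_ext_at a f Hflat).
Qed.

Lemma continuity_pt_of_is_derive f x l : is_derive f x l -> continuity_pt f x.
Proof. intros H. apply derivable_continuous_pt. exists l. apply is_derive_Reals, H. Qed.

Lemma continuity_pt_zero_ext a f :
  (forall s, a < s -> continuity_pt f s) -> flat_at_right a f ->
  forall s, continuity_pt (zero_ext a f) s.
Proof.
  intros Hf Hflat s.
  destruct (Rlt_dec a s) as [Has|Has].
  - exact (continuity_pt_ext_loc _ _ _ (zero_ext_near_right a f s Has) (Hf s Has)).
  - destruct (Rlt_dec s a) as [Hsa|Hsa].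
    + exact (continuity_pt_ext_loc _ _ _ (zero_ext_near_left a f s Hsa) (continuity_pt_const (fun _ => 0) s (fun _ _ => eq_refl))).
    + replace s with a by lra. exact (continuity_pt_of_is_derive _ _ _ (is_derive_zero_ext_at a f Hflat)).
Qed.

Definition lipschitz_near {T : Type} (d : T -> T -> R) (g : T -> R) : Prop :=
  forall x, exists r, 0 < r /\ exists L,
    forall y z, d y x < r -> d z x < r -> Rabs (g y - g z) <= L * d y z.

Lemma lipschitz_near_of_continuous_derive g g' :
  (forall s, is_derive g s (g' s)) -> (forall s, continuity_pt g' s) -> lipschitz_near Rdist g.
Proof.
  intros Hg Hg' x.
  destruct (Hg' x 1 Rlt_0_1) as [r [Hr Hnear]].
  exists r. split; [exact Hr|]. exists (Rabs (g' x) + 1). intros y z Hy Hz.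
  unfold Rdist in *.
  assert (Hbound : forall c, Rabs (c - x) < r -> Rabs (g' c) <= Rabs (g' x) + 1).
  { intros c Hc. destruct (Req_dec c x) as [->|Hcx]; [lra|].
    assert (Hc' := Hnear c (conj (conj I (not_eq_sym Hcx)) Hc)). simpl in Hc'. unfold Rdist in Hc'.
    pose proof (Rabs_triang_inv (g' c) (g' x)). lra. }
  destruct (MVT_abs g g' z y) as [c [Hmvt Hc]].
  { intros c _. apply is_derive_Reals, Hg. }
  rewrite Hmvt. apply Rmult_le_compat_r; [apply Rabs_pos|]. apply Hbound.
  apply Rabs_lt_between' in Hy. apply Rabs_lt_between' in Hz. apply Rabs_lt_between'.
  pose proof (Rmin_glb_lt z y (x - r)). pose proof (Rmax_lub_lt z y (x + r)). lra.
Qed.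

Section LipschitzNearAlgebra.

Context {T : Type} (d : T -> T -> R).
Hypothesis d_refl : forall x, d x x = 0.
Hypothesis d_nonneg : forall x y, 0 <= d x y.

Lemma lipschitz_near_locally_bounded g : lipschitz_near d g -> forall x, exists r, 0 < r /\
  exists L M, 0 <= L /\
    (forall y z, d y x < r -> d z x < r -> Rabs (g y - g z) <= L * d y z) /\
    (forall y, d y x < r -> Rabs (g y) <= M).
Proof.
  intros Hg x. destruct (Hg x) as [r [Hr [L HL]]].
  assert (HL' : forall y z, d y x < r -> d z x < r -> Rabs (g y - g z) <= Rabs L * d y z).
  { intros y z Hy Hz. eapply Rle_trans; [apply HL; assumption|].
    apply Rmult_le_compat_r; [apply d_nonneg|apply Rle_abs]. }
  exists r. split; [exact Hr|]. exists (Rabs L), (Rabs (g x) + Rabs L * r).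
  split; [apply Rabs_pos|]. split; [exact HL'|].
  intros y Hy. assert (Hx : d x x < r) by (rewrite d_refl; exact Hr).
  pose proof (HL' y x Hy Hx). pose proof (Rabs_triang_inv (g y) (g x)).
  assert (Rabs L * d y x <= Rabs L * r) by (apply Rmult_le_compat_l; [apply Rabs_pos|lra]).
  lra.
Qed.

Lemma lipschitz_near_const c : lipschitz_near d (fun _ => c).
Proof.
  intros x. exists 1. split; [lra|]. exists 0. intros y z _ _.
  rewrite Rminus_diag, Rabs_R0, Rmult_0_l. lra.
Qed.

Lemma lipschitz_near_plus f g :
  lipschitz_near d f -> lipschitz_near d g -> lipschitz_near d (fun y => f y + g y).
Proof.
  intros Hf Hg x. destruct (Hf x) as [r1 [Hr1 [L1 H1]]]. destruct (Hg x) as [r2 [Hr2 [L2 H2]]].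
  exists (Rmin r1 r2). split; [apply Rmin_glb_lt; assumption|]. exists (L1 + L2). intros y z Hy Hz.
  pose proof (Rmin_l r1 r2). pose proof (Rmin_r r1 r2).
  specialize (H1 y z ltac:(lra) ltac:(lra)). specialize (H2 y z ltac:(lra) ltac:(lra)).
  replace (f y + g y - (f z + g z)) with ((f y - f z) + (g y - g z)) by ring.
  eapply Rle_trans; [apply Rabs_triang|]. lra.
Qed.

Lemma lipschitz_near_opp g : lipschitz_near d g -> lipschitz_near d (fun y => - g y).
Proof.
  intros Hg x. destruct (Hg x) as [r [Hr [L HL]]].
  exists r. split; [exact Hr|]. exists L. intros y z Hy Hz.
  replace (- g y - - g z) with (- (g y - g z)) by ring. rewrite Rabs_Ropp. auto.
Qed.

Lemma lipschitz_near_minus f g :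
  lipschitz_near d f -> lipschitz_near d g -> lipschitz_near d (fun y => f y - g y).
Proof. intros Hf Hg. exact (lipschitz_near_plus f _ Hf (lipschitz_near_opp g Hg)). Qed.

Lemma lipschitz_near_mult f g :
  lipschitz_near d f -> lipschitz_near d g -> lipschitz_near d (fun y => f y * g y).
Proof.
  intros Hf Hg x.
  destruct (lipschitz_near_locally_bounded f Hf x) as [r1 [Hr1 [L1 [M1 [HL1 [H1 HM1]]]]]].
  destruct (lipschitz_near_locally_bounded g Hg x) as [r2 [Hr2 [L2 [M2 [HL2 [H2 HM2]]]]]].
  exists (Rmin r1 r2). split; [apply Rmin_glb_lt; assumption|].
  exists (M1 * L2 + M2 * L1). intros y z Hy Hz.
  pose proof (Rmin_l r1 r2). pose proof (Rmin_r r1 r2).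
  specialize (H1 y z ltac:(lra) ltac:(lra)). specialize (H2 y z ltac:(lra) ltac:(lra)).
  specialize (HM1 y ltac:(lra)). specialize (HM2 z ltac:(lra)).
  replace (f y * g y - f z * g z) with (f y * (g y - g z) + g z * (f y - f z)) by ring.
  eapply Rle_trans; [apply Rabs_triang|]. rewrite !Rabs_mult.
  assert (Rabs (f y) * Rabs (g y - g z) <= M1 * (L2 * d y z))
    by (apply Rmult_le_compat; auto using Rabs_pos).
  assert (Rabs (g z) * Rabs (f y - f z) <= M2 * (L1 * d y z))
    by (apply Rmult_le_compat; auto using Rabs_pos).
  lra.
Qed.

Lemma lipschitz_near_comp h f :
  lipschitz_near Rdist h -> lipschitz_near d f -> lipschitz_near d (fun y => h (f y)).
Proof.
  intros Hh Hf x.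
  destruct (lipschitz_near_locally_bounded f Hf x) as [r1 [Hr1 [L1 [M1 [HL1 [H1 _]]]]]].
  destruct (Hh (f x)) as [rh [Hrh0 [Lh HLh]]].
  set (r := Rmin r1 (rh / (L1 + 1))).
  assert (Hr : 0 < r) by (apply Rmin_glb_lt; [|apply Rdiv_lt_0_compat]; lra).
  assert (Hr1' : r <= r1) by apply Rmin_l.
  assert (Hrh : r <= rh / (L1 + 1)) by apply Rmin_r.
  assert (Hclose : forall w, d w x < r -> Rdist (f w) (f x) < rh).
  { intros w Hw. unfold Rdist.
    assert (Hx : d x x < r1) by (rewrite d_refl; lra).
    pose proof (H1 w x ltac:(lra) Hx).
    assert (L1 * d w x <= L1 * (rh / (L1 + 1))) by (apply Rmult_le_compat_l; lra).
    assert (L1 * (rh / (L1 + 1)) < rh).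
    { apply (Rmult_lt_reg_r (L1 + 1)); [lra|]. field_simplify; nra. }
    lra. }
  exists r. split; [exact Hr|]. exists (Rabs Lh * L1). intros y z Hy Hz.
  eapply Rle_trans; [apply HLh; apply Hclose; assumption|].
  apply Rle_trans with (Rabs Lh * Rabs (f y - f z)).
  - apply Rmult_le_compat_r; [apply Rabs_pos|apply Rle_abs].
  - rewrite Rmult_assoc. apply Rmult_le_compat_l; [apply Rabs_pos|apply H1; lra].
Qed.

End LipschitzNearAlgebra.

Section FlatZeroExtension.

Variables (a : R) (f f1 f2 : R -> R).
Hypothesis derives_right :
  forall s, a < s -> is_derive f s (f1 s) /\ is_derive f1 s (f2 s) /\ ex_derive f2 s.
Hypothesis flat_derives : flat_at_right a f /\ flat_at_right a f1 /\ flat_at_right a f2.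

Lemma is_derive_zero_ext_flat s : is_derive (zero_ext a f) s (zero_ext a f1 s).
Proof.
  apply is_derive_zero_ext; [|apply flat_derives].
  intros t Ht. apply (derives_right t Ht).
Qed.

Lemma is_derive_zero_ext_flat_derive s : is_derive (zero_ext a f1) s (zero_ext a f2 s).
Proof.
  apply is_derive_zero_ext; [|apply flat_derives].
  intros t Ht. apply (derives_right t Ht).
Qed.

Lemma lipschitz_near_zero_ext_derive : lipschitz_near Rdist (zero_ext a f1).
Proof.
  apply (lipschitz_near_of_continuous_derive _ _ is_derive_zero_ext_flat_derive).
  apply continuity_pt_zero_ext; [|apply flat_derives].
  intros t Ht. destruct (derives_right t Ht) as [_ [_ [l Hl]]].
  exact (continuity_pt_of_is_derive _ _ _ Hl).
Qed.

Lemma lipschitz_near_zero_ext : lipschitz_near Rdist (zero_ext a f).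
Proof.
  apply (lipschitz_near_of_continuous_derive _ _ is_derive_zero_ext_flat).
  intros s. exact (continuity_pt_of_is_derive _ _ _ (is_derive_zero_ext_flat_derive s)).
Qed.

End FlatZeroExtension.

Lemma Rabs_mult_le x y X Y : Rabs x <= X -> Rabs y <= Y -> Rabs (x * y) <= X * Y.
Proof. intros. rewrite Rabs_mult. apply Rmult_le_compat; auto using Rabs_pos. Qed.

Lemma Rabs_plus_le x y X Y : Rabs x <= X -> Rabs y <= Y -> Rabs (x + y) <= X + Y.
Proof. intros. eapply Rle_trans; [apply Rabs_triang|lra]. Qed.

Lemma Rabs_minus_le x y X Y : Rabs x <= X -> Rabs y <= Y -> Rabs (x - y) <= X + Y.
Proof. intros. eapply Rle_trans; [apply Rabs_triang|]. rewrite Rabs_Ropp. lra. Qed.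

Lemma Rabs_pow_le x X n : Rabs x <= X -> Rabs (x ^ n) <= X ^ n.
Proof. intros. rewrite <- RPow_abs. apply pow_incr. split; auto using Rabs_pos. Qed.

Ltac bound_Rabs := first
  [ eassumption
  | right; apply Rabs_pos_eq; lra
  | eapply Rabs_mult_le; [bound_Rabs|bound_Rabs]
  | eapply Rabs_plus_le; [bound_Rabs|bound_Rabs]
  | eapply Rabs_minus_le; [bound_Rabs|bound_Rabs]
  | eapply Rabs_pow_le; bound_Rabs ].

Lemma Rabs_exp_mult_le x P B : Rabs P <= B -> Rabs (exp x * P) <= exp x * B.
Proof.
  intros HP. rewrite Rabs_mult, Rabs_pos_eq by (left; apply exp_pos).
  apply Rmult_le_compat_l; [left; apply exp_pos|exact HP].
Qed.

Definition bump (t : R) : R := exp (- / (t - 1)).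
Definition bump1 (t : R) : R := exp (- / (t - 1)) * (/ (t - 1)) ^ 2.
Definition bump2 (t : R) : R := exp (- / (t - 1)) * ((/ (t - 1)) ^ 4 - 2 * (/ (t - 1)) ^ 3).

Lemma bump_derives t : 1 < t ->
  is_derive bump t (bump1 t) /\ is_derive bump1 t (bump2 t) /\ ex_derive bump2 t.
Proof.
  intros Ht. unfold bump, bump1, bump2. split; [|split].
  - auto_derive; [lra|]. unfold Rminus. field. lra.
  - auto_derive; [lra|]. unfold Rminus. field. lra.
  - auto_derive. lra.
Qed.

Lemma bump_flat :
  flat_at_right 1 bump /\ flat_at_right 1 bump1 /\ flat_at_right 1 bump2.
Proof.
  assert (Hbound : forall t, 1 < t < 1 + 1 ->
    Rabs 1 <= 100 * (/ (t - 1)) ^ 4 /\ Rabs ((/ (t - 1)) ^ 2) <= 100 * (/ (t - 1)) ^ 4 /\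
    Rabs ((/ (t - 1)) ^ 4 - 2 * (/ (t - 1)) ^ 3) <= 100 * (/ (t - 1)) ^ 4).
  { intros t Ht. assert (HU : 1 <= / (t - 1)) by (rewrite <- Rinv_1; apply Rinv_le_contravar; lra).
    set (U := / (t - 1)) in *. assert (HU' : Rabs U <= U) by (rewrite Rabs_pos_eq; lra).
    assert (U <= U ^ 2) by nra. assert (U ^ 2 <= U ^ 3) by nra. assert (U ^ 3 <= U ^ 4) by nra.
    split; [|split]; (eapply Rle_trans; [bound_Rabs|]); ring_simplify; lra. }
  split; [|split]; apply (flat_at_right_of_exp_bound _ _ 100); intros t Ht;
    [unfold bump; rewrite <- (Rmult_1_r (exp _)) at 1| unfold bump1| unfold bump2];
    apply Rabs_exp_mult_le, Hbound, Ht.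
Qed.

Definition osc (c s : R) : R := exp (- / (s - 1)) * sin (/ (sqrt s - 1) + c) * / sqrt s.

(* The first two derivatives of [osc c] are [exp (- / (s - 1))] times these polynomials
   in [sin], [cos], [/ sqrt s], [/ (sqrt s - 1)] and [/ (s - 1)]. *)
Definition osc_poly1 (S C T Th U : R) : R :=
  U ^ 2 * S * T - / 2 * C * Th ^ 2 * T ^ 2 - / 2 * S * T ^ 3.
Definition osc_poly2 (S C T Th U : R) : R :=
  U ^ 4 * S * T - 2 * U ^ 3 * S * T - U ^ 2 * C * Th ^ 2 * T ^ 2 - U ^ 2 * S * T ^ 3
  - / 4 * S * Th ^ 4 * T ^ 3 + / 2 * C * Th ^ 3 * T ^ 3 + 3 / 4 * C * Th ^ 2 * T ^ 4
  + 3 / 4 * S * T ^ 5.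

Definition osc1 (c s : R) : R := exp (- / (s - 1)) *
  osc_poly1 (sin (/ (sqrt s - 1) + c)) (cos (/ (sqrt s - 1) + c)) (/ sqrt s) (/ (sqrt s - 1)) (/ (s - 1)).
Definition osc2 (c s : R) : R := exp (- / (s - 1)) *
  osc_poly2 (sin (/ (sqrt s - 1) + c)) (cos (/ (sqrt s - 1) + c)) (/ sqrt s) (/ (sqrt s - 1)) (/ (s - 1)).

Lemma sqrt_gt_1 s : 1 < s -> 1 < sqrt s.
Proof. intros Hs. rewrite <- sqrt_1. apply sqrt_lt_1_alt. lra. Qed.

Lemma osc_derives c s : 1 < s ->
  is_derive (osc c) s (osc1 c s) /\ is_derive (osc1 c) s (osc2 c s) /\ ex_derive (osc2 c) s.
Proof.
  intros Hs. pose proof (sqrt_gt_1 s Hs). unfold osc, osc1, osc2, osc_poly1, osc_poly2.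
  split; [|split].
  - auto_derive; [repeat split; lra|]. unfold Rminus. field. repeat split; lra.
  - auto_derive; [repeat split; lra|]. unfold Rminus. field. repeat split; lra.
  - auto_derive. repeat split; lra.
Qed.

Lemma osc_polys_bound S C T Th U :
  Rabs S <= 1 -> Rabs C <= 1 -> Rabs T <= 1 -> Rabs Th <= 3 * U -> 1 <= U ->
  Rabs (S * T) <= 100 * U ^ 4 /\
  Rabs (osc_poly1 S C T Th U) <= 100 * U ^ 4 /\
  Rabs (osc_poly2 S C T Th U) <= 100 * U ^ 4.
Proof.
  intros HS HC HT HTh HU. assert (HU' : Rabs U <= U) by (rewrite Rabs_pos_eq; lra).
  assert (U <= U ^ 2) by nra. assert (U ^ 2 <= U ^ 3) by nra. assert (U ^ 3 <= U ^ 4) by nra.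
  unfold osc_poly1, osc_poly2.
  split; [|split]; (eapply Rle_trans; [bound_Rabs|]); ring_simplify; lra.
Qed.

Lemma osc_args_bound s : 1 < s < 2 ->
  1 <= / (s - 1) /\ Rabs (/ sqrt s) <= 1 /\ Rabs (/ (sqrt s - 1)) <= 3 * / (s - 1).
Proof.
  intros Hs. pose proof (sqrt_gt_1 s ltac:(lra)) as Hs1.
  assert (Hs2 : sqrt s < 2).
  { rewrite <- (sqrt_square 2) by lra. apply sqrt_lt_1_alt. lra. }
  assert (Hsq : sqrt s * sqrt s = s) by (apply sqrt_sqrt; lra).
  split; [|split].
  - rewrite <- Rinv_1. apply Rinv_le_contravar; lra.
  - rewrite Rabs_pos_eq by (left; apply Rinv_0_lt_compat; lra).
    rewrite <- Rinv_1. apply Rinv_le_contravar; lra.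
  - rewrite Rabs_pos_eq by (left; apply Rinv_0_lt_compat; lra).
    replace (/ (sqrt s - 1)) with ((sqrt s + 1) * / (s - 1)).
    + apply Rmult_le_compat_r; [left; apply Rinv_0_lt_compat|]; lra.
    + replace (s - 1) with ((sqrt s - 1) * (sqrt s + 1)) by nra. field. lra.
Qed.

Lemma osc_flat c :
  flat_at_right 1 (osc c) /\ flat_at_right 1 (osc1 c) /\ flat_at_right 1 (osc2 c).
Proof.
  assert (Hbound : forall s, 1 < s < 1 + 1 ->
    Rabs (sin (/ (sqrt s - 1) + c) * / sqrt s) <= 100 * (/ (s - 1)) ^ 4 /\
    Rabs (osc_poly1 (sin (/ (sqrt s - 1) + c)) (cos (/ (sqrt s - 1) + c))
            (/ sqrt s) (/ (sqrt s - 1)) (/ (s - 1))) <= 100 * (/ (s - 1)) ^ 4 /\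
    Rabs (osc_poly2 (sin (/ (sqrt s - 1) + c)) (cos (/ (sqrt s - 1) + c))
            (/ sqrt s) (/ (sqrt s - 1)) (/ (s - 1))) <= 100 * (/ (s - 1)) ^ 4).
  { intros s Hs. destruct (osc_args_bound s ltac:(lra)) as [HU [HT HTh]].
    apply osc_polys_bound; auto; apply Rabs_le; auto using SIN_bound, COS_bound. }
  split; [|split]; apply (flat_at_right_of_exp_bound _ _ 100); intros s Hs;
    [unfold osc; rewrite Rmult_assoc| unfold osc1| unfold osc2];
    apply Rabs_exp_mult_le, Hbound, Hs.
Qed.

Definition sqnorm2 (x : R * R) : R := fst x * fst x + snd x * snd x.

Lemma filterdiff_comp_is_derive (f : R * R -> R) (g : R -> R) x lf l :
  filterdiff f (locally x) lf -> is_derive g (f x) l ->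
  filterdiff (fun y => g (f y)) (locally x) (fun h => lf h * l).
Proof. intros Hf Hg. exact (filterdiff_comp' f g x lf (fun h => scal h l) Hf Hg). Qed.

Lemma filterdiff_fst (x : R * R) : filterdiff fst (locally x) fst.
Proof. apply filterdiff_linear, is_linear_fst. Qed.

Lemma filterdiff_snd (x : R * R) : filterdiff snd (locally x) snd.
Proof. apply filterdiff_linear, is_linear_snd. Qed.

Lemma filterdiff_Rplus (f g : R * R -> R) x lf lg :
  filterdiff f (locally x) lf -> filterdiff g (locally x) lg ->
  filterdiff (fun y => f y + g y) (locally x) (fun h => lf h + lg h).
Proof. exact (filterdiff_plus_fct (K := R_AbsRing) f g lf lg). Qed.

Lemma filterdiff_Rminus (f g : R * R -> R) x lf lg :
  filterdiff f (locally x) lf -> filterdiff g (locally x) lg ->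
  filterdiff (fun y => f y - g y) (locally x) (fun h => lf h - lg h).
Proof. exact (filterdiff_minus_fct (K := R_AbsRing) f g lf lg). Qed.

Lemma filterdiff_Rmult (f g : R * R -> R) x lf lg :
  filterdiff f (locally x) lf -> filterdiff g (locally x) lg ->
  filterdiff (fun y => f y * g y) (locally x) (fun h => lf h * g x + f x * lg h).
Proof. exact (filterdiff_mult_fct (K := R_AbsRing) f g x lf lg Rmult_comm). Qed.

Lemma filterdiff_sqnorm2 x :
  filterdiff sqnorm2 (locally x) (fun h => 2 * (fst x * fst h + snd x * snd h)).
Proof.
  eapply filterdiff_ext_lin.
  - apply filterdiff_Rplus; apply filterdiff_Rmult;
      [apply filterdiff_fst|apply filterdiff_fst|apply filterdiff_snd|apply filterdiff_snd].
  - intros h. simpl. ring.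
Qed.

(* Inside the disc [bump (2 - s) = exp (1 / (s - 1))]; outside it [cos u = sin (u + PI / 2)]. *)
Lemma F_decomposition x :
  F x = zero_ext 1 bump (2 - sqnorm2 x) - zero_ext 1 (osc 0) (sqnorm2 x) * fst x
        + zero_ext 1 (osc (PI / 2)) (sqnorm2 x) * snd x.
Proof.
  unfold F, norm2, zero_ext, bump, osc.
  replace (fst x ^ 2 + snd x ^ 2) with (sqnorm2 x) by (unfold sqnorm2; ring).
  assert (Hs0 : 0 <= sqnorm2 x) by (unfold sqnorm2; nra).
  set (s := sqnorm2 x) in *.
  pose proof (sqrt_pos s) as Hr0. pose proof (sqrt_sqrt s Hs0) as Hrr.
  rewrite pow2_sqrt by exact Hs0.
  destruct (Rlt_dec (sqrt s) 1) as [Hr|Hr]; [|destruct (Rlt_dec 1 (sqrt s)) as [Hr'|Hr']].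
  - assert (s < 1) by nra.
    destruct (Rlt_dec 1 (2 - s)); [|lra]. destruct (Rlt_dec 1 s); [lra|].
    replace (- / (2 - s - 1)) with (1 / (s - 1)) by (field; lra). ring.
  - assert (1 < s) by nra.
    destruct (Rlt_dec 1 (2 - s)); [lra|]. destruct (Rlt_dec 1 s); [|lra].
    rewrite Rplus_0_r, (Rplus_comm _ (PI / 2)), <- cos_sin.
    replace (-1 / (s - 1)) with (- / (s - 1)) by (field; lra).
    unfold Rdiv. rewrite !Rmult_1_l. ring.
  - assert (s = 1) by nra.
    destruct (Rlt_dec 1 (2 - s)); [lra|]. destruct (Rlt_dec 1 s); [lra|]. ring.
Qed.

Lemma zero_ext_osc_mult_le c s y : y * y <= s -> Rabs (zero_ext 1 (osc c) s * y) <= 1.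
Proof.
  intros Hy. unfold zero_ext, osc. destruct (Rlt_dec 1 s) as [Hs|Hs].
  - pose proof (sqrt_gt_1 s Hs) as Hr.
    assert (Hexp : exp (- / (s - 1)) <= 1).
    { assert (0 < / (s - 1)) by (apply Rinv_0_lt_compat; lra).
      rewrite <- exp_0 at 2. apply Rlt_le, exp_increasing. lra. }
    assert (Hsin : Rabs (sin (/ (sqrt s - 1) + c)) <= 1) by (apply Rabs_le, SIN_bound).
    assert (Hy' : / sqrt s * Rabs y <= 1).
    { rewrite <- (Rinv_l (sqrt s)) by lra. apply Rmult_le_compat_l; [left; apply Rinv_0_lt_compat; lra|].
      rewrite <- sqrt_Rsqr_abs. apply sqrt_le_1_alt. unfold Rsqr. lra. }
    rewrite !Rabs_mult, Rabs_pos_eq by (left; apply exp_pos).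
    rewrite (Rabs_pos_eq (/ sqrt s)) by (left; apply Rinv_0_lt_compat; lra).
    pose proof (exp_pos (- / (s - 1))). pose proof (Rabs_pos (sin (/ (sqrt s - 1) + c))).
    assert (0 <= / sqrt s * Rabs y)
      by (apply Rmult_le_pos; [left; apply Rinv_0_lt_compat; lra|apply Rabs_pos]).
    rewrite Rmult_assoc. apply Rle_trans with (1 * 1); [|lra].
    apply Rmult_le_compat; [nra|lra|nra|lra].
  - rewrite Rmult_0_l, Rabs_R0. lra.
Qed.

Lemma F_ge_neg2 x : -2 <= F x.
Proof.
  rewrite F_decomposition.
  assert (Hbump : 0 <= zero_ext 1 bump (2 - sqnorm2 x)).
  { unfold zero_ext, bump. destruct (Rlt_dec 1 _); [left; apply exp_pos|lra]. }
  pose proof (zero_ext_osc_mult_le 0 (sqnorm2 x) (fst x)) as H1.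
  pose proof (zero_ext_osc_mult_le (PI / 2) (sqnorm2 x) (snd x)) as H2.
  unfold sqnorm2 in *.
  apply Rabs_le_between in H1; [|nra]. apply Rabs_le_between in H2; [|nra]. lra.
Qed.

Definition F_grad (x : R * R) : R * R :=
  let s := sqnorm2 x in
  let b := - zero_ext 1 bump1 (2 - s) - zero_ext 1 (osc1 0) s * fst x
           + zero_ext 1 (osc1 (PI / 2)) s * snd x in
  (2 * b * fst x - zero_ext 1 (osc 0) s, 2 * b * snd x + zero_ext 1 (osc (PI / 2)) s).

Lemma F_filterdiff x : filterdiff F (locally x) (dotl (F_grad x)).
Proof.
  apply (filterdiff_ext (fun y => zero_ext 1 bump (2 - sqnorm2 y)
           - zero_ext 1 (osc 0) (sqnorm2 y) * fst y + zero_ext 1 (osc (PI / 2)) (sqnorm2 y) * snd y)).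
  { intros y. symmetry. apply F_decomposition. }
  assert (Hsq := filterdiff_sqnorm2 x).
  eapply filterdiff_ext_lin.
  - apply filterdiff_Rplus; [apply filterdiff_Rminus|apply filterdiff_Rmult].
    + apply filterdiff_comp_is_derive with (f := fun y => 2 - sqnorm2 y).
      * apply filterdiff_Rminus; [apply filterdiff_const|exact Hsq].
      * apply (is_derive_zero_ext_flat 1 bump bump1 bump2 bump_derives bump_flat).
    + apply filterdiff_Rmult; [|apply filterdiff_fst].
      apply filterdiff_comp_is_derive; [exact Hsq|].
      apply (is_derive_zero_ext_flat 1 _ _ _ (osc_derives 0) (osc_flat 0)).
    + apply filterdiff_comp_is_derive; [exact Hsq|].
      apply (is_derive_zero_ext_flat 1 _ _ _ (osc_derives (PI / 2)) (osc_flat (PI / 2))).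
    + apply filterdiff_snd.
  - intros h. unfold dotl, F_grad. simpl. rewrite (Rminus_0_l (2 * _)). ring.
Qed.

Lemma dist2_refl x : dist2 x x = 0.
Proof.
  unfold dist2, norm2. cbn [fst snd]. rewrite !Rminus_diag.
  replace (0 ^ 2 + 0 ^ 2) with 0 by ring. apply sqrt_0.
Qed.

Lemma dist2_nonneg x y : 0 <= dist2 x y.
Proof. apply sqrt_pos. Qed.

Lemma Rabs_fst_le_dist2 y z : Rabs (fst y - fst z) <= dist2 y z.
Proof.
  unfold dist2, norm2. cbn [fst snd]. rewrite <- sqrt_Rsqr_abs. apply sqrt_le_1_alt.
  pose proof (pow2_ge_0 (snd y - snd z)). unfold Rsqr. lra.
Qed.

Lemma Rabs_snd_le_dist2 y z : Rabs (snd y - snd z) <= dist2 y z.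
Proof.
  unfold dist2, norm2. cbn [fst snd]. rewrite <- sqrt_Rsqr_abs. apply sqrt_le_1_alt.
  pose proof (pow2_ge_0 (fst y - fst z)). unfold Rsqr. lra.
Qed.

Lemma lipschitz_near_fst : lipschitz_near dist2 fst.
Proof.
  intros x. exists 1. split; [lra|]. exists 1. intros y z _ _.
  rewrite Rmult_1_l. apply Rabs_fst_le_dist2.
Qed.

Lemma lipschitz_near_snd : lipschitz_near dist2 snd.
Proof.
  intros x. exists 1. split; [lra|]. exists 1. intros y z _ _.
  rewrite Rmult_1_l. apply Rabs_snd_le_dist2.
Qed.

Lemma locally_lipschitz_of_components g :
  lipschitz_near dist2 (fun x => fst (g x)) -> lipschitz_near dist2 (fun x => snd (g x)) ->
  locally_lipschitz g.
Proof.
  intros H1 H2 x. destruct (H1 x) as [r1 [Hr1 [L1 HL1]]]. destruct (H2 x) as [r2 [Hr2 [L2 HL2]]].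
  exists (Rmin r1 r2). split; [apply Rmin_glb_lt; assumption|]. exists (L1 + L2). intros y z Hy Hz.
  pose proof (Rmin_l r1 r2). pose proof (Rmin_r r1 r2).
  specialize (HL1 y z ltac:(lra) ltac:(lra)). specialize (HL2 y z ltac:(lra) ltac:(lra)).
  apply Rle_trans with (Rabs (fst (g y) - fst (g z)) + Rabs (snd (g y) - snd (g z))); [|lra].
  unfold dist2 at 1, norm2. cbn [fst snd].
  pose proof (Rabs_pos (fst (g y) - fst (g z))). pose proof (Rabs_pos (snd (g y) - snd (g z))).
  rewrite <- sqrt_square by lra. apply sqrt_le_1_alt.
  rewrite <- (pow2_abs (fst (g y) - fst (g z))), <- (pow2_abs (snd (g y) - snd (g z))). nra.
Qed.

Lemma lipschitz_near_sqnorm2 : lipschitz_near dist2 sqnorm2.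
Proof.
  apply lipschitz_near_plus; apply (lipschitz_near_mult _ dist2_refl dist2_nonneg).
  - exact lipschitz_near_fst.
  - exact lipschitz_near_fst.
  - exact lipschitz_near_snd.
  - exact lipschitz_near_snd.
Qed.

Ltac lipschitz_near_dist2 :=
  repeat first
    [ apply lipschitz_near_const
    | apply lipschitz_near_fst
    | apply lipschitz_near_snd
    | apply lipschitz_near_sqnorm2
    | apply lipschitz_near_plus
    | apply lipschitz_near_minus
    | apply lipschitz_near_opp
    | apply (lipschitz_near_mult _ dist2_refl dist2_nonneg)
    | apply (lipschitz_near_comp _ dist2_refl dist2_nonneg (zero_ext 1 bump1));
        [exact (lipschitz_near_zero_ext_derive 1 _ _ _ bump_derives bump_flat)|]
    | apply (lipschitz_near_comp _ dist2_refl dist2_nonneg (zero_ext 1 (osc1 _)));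
        [exact (lipschitz_near_zero_ext_derive 1 _ _ _ (osc_derives _) (osc_flat _))|]
    | apply (lipschitz_near_comp _ dist2_refl dist2_nonneg (zero_ext 1 (osc _)));
        [exact (lipschitz_near_zero_ext 1 _ _ _ (osc_derives _) (osc_flat _))|] ].

Lemma F_grad_locally_lipschitz : locally_lipschitz F_grad.
Proof.
  apply locally_lipschitz_of_components; unfold F_grad; cbn [fst snd]; lipschitz_near_dist2.
Qed.

Theorem proposition6p1 :
  (exists m : R, forall x : R * R, m <= F x) /\
  (forall x : R * R, ex_filterdiff F (locally x)) /\
  (exists grad : R * R -> R * R,
     (forall x : R * R, filterdiff F (locally x) (dotl (grad x))) /\
     locally_lipschitz grad).
Proof.
  split; [exists (-2); exact F_ge_neg2|]. split.
  - intros x. exists (dotl (F_grad x)). apply F_filterdiff.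
  - exists F_grad. split; [exact F_filterdiff|exact F_grad_locally_lipschitz].
Qed.
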